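(* Let $A,C,\varepsilon_g$ be positive constants with $\varepsilon_g<1/2$, and let $r>0$ be a fixed constant. For $N$ sufficiently large the following holds: whenever $x<y$ are in $I_W$ with $|x-y|\ge N^{\varepsilon_g}$, there do not exist real numbers $D_1,D_2,D_3,D_4$ with $r^2\le D_1^2+D_2^2+D_3^2+D_4^2\le N^{A}$ such that \[\sum_{i=1}^n\|D_1b_i(x)+D_2c_i(x)+D_3b_i(y)+D_4c_i(y)\|_{\mathbb R/\mathbb Z}^2\le C\log N.\]
   Context: Let $0<c_1<c_2$ be constants, $n$ a large integer and $M$ a large parameter (possibly growing with $n$) with $I_W:=[c_1M,c_2M]\subset[0,\sqrt n-M]$; set $N:=M$. For $x>0$ and $1\le i\le n$ let $b_i(x)=\sqrt N\,e^{-x^2/2}\,x^i/\sqrt{i!}$ and $c_i(x)=b_i'(x)=\sqrt N\,e^{-x^2/2}\,\frac{i-x^2}{x}\,\frac{x^i}{\sqrt{i!}}$. For $t\in\mathbb R$, $\|t\|_{\mathbb R/\mathbb Z}$ denotes the distance from $t$ to the nearest integer. *)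

From Stdlib Require Import Reals Arith.
Open Scope R_scope.

Fixpoint sum1 (n : nat) (f : nat -> R) : R :=
  match n with
  | O => 0
  | S m => sum1 m f + f (S m)
  end.

(* distance from t to the nearest integer, ||t||_{R/Z};
   Int_part t is floor t. *)
Definition distZ (t : R) : R :=
  let fr := t - IZR (Int_part t) in Rmin fr (1 - fr).

Definition b_fun (N : R) (i : nat) (x : R) : R :=
  sqrt N * exp (- x ^ 2 / 2) * x ^ i / sqrt (INR (Factorial.fact i)).

(* c_i(x) = b_i'(x) = sqrt N e^{-x^2/2} ((i - x^2)/x) x^i / sqrt(i!) *)
Definition c_fun (N : R) (i : nat) (x : R) : R :=
  sqrt N * exp (- x ^ 2 / 2) * ((INR i - x ^ 2) / x) * x ^ i / sqrt (INR (Factorial.fact i)).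

From Stdlib Require Import Reals Lra Lia Wf_nat Classical.
From Coquelicot Require Import Coquelicot.
Open Scope R_scope.

(* Write [v_i] for the argument of [distZ] and [s_z(i) = (i - z^2) / z], so that
   [c_i(z) = b_i(z) s_z(i)].  Up to the factor [N], [b_i(z)^2] is the Poisson(z^2) weight of
   [i]; with [S = N^(eps_g/8)], along the window [z^2 <= i <= z^2 + z S] it falls from order
   one to super-polynomially small, by a factor at least [1 - S / z] per step, while there the
   terms of the other point are smaller by [exp (-(x - y)^2 / 4)].  Taking for [z] the point
   whose coefficients [P] carry half of [r^2], [v_i] is [b_i(z) (P1 + P2 s_z(i))] up to a
   negligible error.  On the run of about [z / S] consecutive [i] where [b_i(z) |P| S] lies in
   [[tau, 1/4]] we have [distZ v_i = |v_i|], and the affine function [P1 + P2 s] cannot be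
   small at both [s] and [s + w] once [w >~ 1 / S]; pairing [i] with [i + q] gives
   [sum distZ (v_i)^2 >~ N / S^7 = N^(1 - 7 eps_g/8)], which exceeds [C ln N]. *)

Lemma ln_le_sub1 (w : R) : 0 < w -> ln w <= w - 1.
Proof. intros Hw. pose proof (exp_ineq1_le (ln w)) as H. rewrite exp_ln in H by exact Hw. lra. Qed.

Lemma ln_1_plus_ge (t : R) : 0 <= t -> 2 * t / (2 + t) <= ln (1 + t).
Proof.
  intros Ht.
  set (f := fun u => ln (1 + u) - 2 * u / (2 + u)).
  set (df := fun u => / (1 + u) - 4 / (2 + u) ^ 2).
  assert (Hd : forall u, 0 <= u -> is_derive f u (df u)).
  { intros u Hu. unfold f, df. auto_derive; [lra | field; lra]. }
  destruct (MVT_gen f 0 t df) as [c [Hc Hfc]].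
  - intros u Hu. apply Hd. rewrite Rmin_left in Hu by lra. lra.
  - intros u Hu. rewrite Rmin_left in Hu by lra.
    apply continuity_pt_filterlim, (ex_derive_continuous (K := R_AbsRing) (V := R_NormedModule)).
    eexists. apply Hd. lra.
  - rewrite Rmin_left, Rmax_right in Hc by lra.
    assert (Hdf : 0 <= df c).
    { unfold df. replace (/ (1 + c) - 4 / (2 + c) ^ 2) with (c ^ 2 / ((1 + c) * (2 + c) ^ 2))
        by (field; lra).
      apply Rle_div_r; [apply Rmult_lt_0_compat; nra | rewrite Rmult_0_l; nra]. }
    unfold f in Hfc. rewrite Rplus_0_r, ln_1 in Hfc.
    assert (0 <= df c * (t - 0)) by (apply Rmult_le_pos; lra).
    replace (2 * 0 / (2 + 0)) with 0 in Hfc by field. lra.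
Qed.

Lemma pow_1_minus_ge (u : R) (k : nat) : 0 <= u <= 1 -> 1 - INR k * u <= (1 - u) ^ k.
Proof.
  intros Hu. induction k as [|k IH]; [simpl; lra |].
  rewrite S_INR, <- tech_pow_Rmult.
  pose proof (pos_INR k). pose proof (pow_le (1 - u) k ltac:(lra)). nra.
Qed.

Lemma sq_ge_of_approx (v c e : R) : Rabs (v - c) <= e -> c ^ 2 / 2 - e ^ 2 <= v ^ 2.
Proof.
  intros H. pose proof (Rabs_pos (v - c)). rewrite <- pow2_abs in *.
  assert (Rabs (v - c) ^ 2 <= e ^ 2) by (apply pow_incr; lra).
  rewrite pow2_abs in *. pose proof (pow2_ge_0 (2 * v - c)). nra.
Qed.

Lemma distZ_abs (t : R) : Rabs t <= 1 / 2 -> distZ t = Rabs t.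
Proof.
  intros Ht. unfold distZ, Rmin.
  destruct (Rle_or_lt 0 t) as [H0 | H0].
  - rewrite Rabs_pos_eq in * by lra.
    rewrite <- (Int_part_spec t 0) by (simpl; lra). simpl.
    destruct (Rle_dec _ _); lra.
  - rewrite Rabs_left in * by lra.
    rewrite <- (Int_part_spec t (-1)) by (simpl; lra). simpl.
    destruct (Rle_dec _ _); lra.
Qed.

Lemma ln_1_plus_inv_bounds (a : R) : 0 < a ->
  a * ln (1 + / a) <= 1 <= (a + 1 / 2) * ln (1 + / a).
Proof.
  intros Ha. assert (Hi : 0 < / a) by (apply Rinv_0_lt_compat; lra). split.
  - pose proof (ln_le_sub1 (1 + / a) ltac:(lra)).
    replace 1 with (a * / a) at 2 by (field; lra). apply Rmult_le_compat_l; lra.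
  - pose proof (ln_1_plus_ge (/ a) ltac:(lra)) as H.
    replace (2 * / a / (2 + / a)) with (1 / (a + 1 / 2)) in H by (field; lra).
    apply Rle_div_l in H; lra.
Qed.

Lemma ln_fact_bounds (i : nat) : (1 <= i)%nat ->
  INR i * ln (INR i) - INR i <= ln (INR (Factorial.fact i)) <=
  1 + ln (INR i) / 2 + INR i * ln (INR i) - INR i.
Proof.
  induction i as [|i IH]; intros Hi; [lia |].
  destruct (Nat.eq_dec i 0) as [-> | Hne]; [simpl; rewrite ln_1; lra |].
  specialize (IH ltac:(lia)).
  assert (Ha : 1 <= INR i) by (apply (le_INR 1); lia).
  pose proof (INR_fact_lt_0 i).
  change (Factorial.fact (S i)) with (S i * Factorial.fact i)%nat.
  rewrite mult_INR, S_INR, ln_mult by lra.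
  replace (ln (INR i + 1)) with (ln (INR i) + ln (1 + / INR i)).
  - pose proof (ln_1_plus_inv_bounds (INR i) ltac:(lra)). lra.
  - rewrite <- ln_mult by (try apply Rplus_lt_0_compat; try apply Rinv_0_lt_compat; lra).
    f_equal. field. lra.
Qed.

Lemma exp_le (a b : R) : a <= b -> exp a <= exp b.
Proof. intros [H | ->]; [left; apply exp_increasing |]; lra. Qed.

Lemma ln_sub_le (z w : R) : 0 < z -> 0 < w -> ln w - ln z <= (w - z) / z.
Proof.
  intros Hz Hw.
  replace (ln w - ln z) with (ln (w / z))
    by (unfold Rdiv; rewrite ln_mult, ln_Rinv; try apply Rinv_0_lt_compat; lra).
  replace ((w - z) / z) with (w / z - 1) by (field; lra).
  apply ln_le_sub1, Rdiv_lt_0_compat; lra.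
Qed.

Lemma kl_term_le (a l : R) : 0 < a -> 0 < l ->
  a * (ln a - ln l) - (a - l) <= (a - l) ^ 2 / l.
Proof.
  intros Ha Hl. pose proof (ln_sub_le l a Hl Ha).
  replace ((a - l) ^ 2 / l) with (a * ((a - l) / l) - (a - l)) by (field; lra).
  apply Rplus_le_compat_r, Rmult_le_compat_l; lra.
Qed.

Lemma kl_term_ge (a l : R) : 0 < l -> l <= a ->
  (a - l) ^ 2 / (a + l) <= a * (ln a - ln l) - (a - l).
Proof.
  intros Hl Hla.
  set (t := (a - l) / l).
  assert (Ht : 0 <= t) by (apply Rle_div_r; lra).
  replace (ln a - ln l) with (ln (1 + t))
    by (replace a with (l * (1 + t)) by (unfold t; field; lra); rewrite ln_mult; lra).
  pose proof (ln_1_plus_ge t Ht) as H.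
  replace (2 * t / (2 + t)) with (2 * (a - l) / (a + l)) in H by (unfold t; field; lra).
  replace ((a - l) ^ 2 / (a + l)) with (a * (2 * (a - l) / (a + l)) - (a - l)) by (field; lra).
  apply Rplus_le_compat_r, Rmult_le_compat_l; lra.
Qed.

Lemma comb_abs_le (P1 P2 s B : R) : P1 ^ 2 + P2 ^ 2 <= B ^ 2 -> 0 <= B ->
  Rabs (P1 + P2 * s) <= B * (1 + Rabs s).
Proof.
  intros H HB.
  assert (H1 : Rabs P1 <= B)
    by (apply Rsqr_incr_0_var; [rewrite !Rsqr_pow2, pow2_abs; nra | lra]).
  assert (H2 : Rabs P2 <= B)
    by (apply Rsqr_incr_0_var; [rewrite !Rsqr_pow2, pow2_abs; nra | lra]).
  eapply Rle_trans; [apply Rabs_triang |]. rewrite Rabs_mult.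
  pose proof (Rabs_pos s). nra.
Qed.

(** * The functions [b_i] and [c_i] *)

Lemma sqrt_fact_pos (i : nat) : 0 < sqrt (INR (Factorial.fact i)).
Proof. apply sqrt_lt_R0, INR_fact_lt_0. Qed.

Lemma b_fun_exp (N z : R) (i : nat) : 0 < z ->
  b_fun N i z = sqrt N / sqrt (INR (Factorial.fact i)) * exp (- z ^ 2 / 2 + INR i * ln z).
Proof.
  intros Hz. unfold b_fun.
  rewrite exp_plus, <- (Rpower_pow i z Hz). unfold Rpower.
  pose proof (sqrt_fact_pos i). field. lra.
Qed.

Lemma b_fun_pos (N z : R) (i : nat) : 0 < N -> 0 < z -> 0 < b_fun N i z.
Proof.
  intros HN Hz. rewrite b_fun_exp by lra. pose proof (sqrt_fact_pos i).
  apply Rmult_lt_0_compat; [apply Rdiv_lt_0_compat; [apply sqrt_lt_R0 |] |]; lra || apply exp_pos.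
Qed.

Lemma b_fun_succ (N z : R) (i : nat) : 0 < z ->
  b_fun N (S i) z = b_fun N i z * z / sqrt (INR (S i)).
Proof.
  intros Hz. unfold b_fun.
  change (Factorial.fact (S i)) with (S i * Factorial.fact i)%nat.
  rewrite mult_INR, sqrt_mult by (apply pos_INR).
  pose proof (sqrt_fact_pos i). pose proof (sqrt_lt_R0 (INR (S i)) (lt_0_INR _ (Nat.lt_0_succ i))).
  simpl pow. field. lra.
Qed.

Lemma c_fun_eq (N z : R) (i : nat) : 0 < z ->
  c_fun N i z = b_fun N i z * ((INR i - z ^ 2) / z).
Proof. intros Hz. unfold c_fun, b_fun. pose proof (sqrt_fact_pos i). field. lra. Qed.

Lemma b_fun_sq (N z : R) (i : nat) : 0 < N -> 0 < z ->
  b_fun N i z ^ 2 = N * exp (- z ^ 2 + INR i * ln (z ^ 2) - ln (INR (Factorial.fact i))).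
Proof.
  intros HN Hz.
  pose proof (sqrt_fact_pos i). pose proof (INR_fact_lt_0 i).
  unfold Rminus. rewrite !exp_plus, (exp_Ropp (ln _)), exp_ln by lra.
  change (exp (INR i * ln (z ^ 2))) with (Rpower (z ^ 2) (INR i)).
  rewrite Rpower_pow by (apply pow_lt; lra).
  assert (Hhalf : exp (- z ^ 2 / 2) ^ 2 = exp (- z ^ 2)).
  { change (exp (- z ^ 2 / 2) ^ 2) with (exp (- z ^ 2 / 2) * (exp (- z ^ 2 / 2) * 1)).
    rewrite Rmult_1_r, <- exp_plus. f_equal. field. }
  rewrite <- Hhalf.
  unfold b_fun.
  replace ((sqrt N * exp (- z ^ 2 / 2) * z ^ i / sqrt (INR (Factorial.fact i))) ^ 2)
    with (sqrt N ^ 2 * exp (- z ^ 2 / 2) ^ 2 * (z ^ i) ^ 2 / sqrt (INR (Factorial.fact i)) ^ 2)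
    by (field; lra).
  rewrite !pow2_sqrt, <- pow_mult, <- pow_mult, Nat.mul_comm by lra. field. lra.
Qed.

Lemma b_fun_sq_le (N z : R) (i : nat) : 0 < N -> 0 < z -> z ^ 2 <= INR i ->
  b_fun N i z ^ 2 <= N * exp (- ((INR i - z ^ 2) ^ 2 / (INR i + z ^ 2))).
Proof.
  intros HN Hz Hi.
  assert (Hz2 : 0 < z ^ 2) by (apply pow_lt; lra).
  assert (Hi1 : (1 <= i)%nat) by (destruct i; [simpl in Hi; lra | lia]).
  rewrite b_fun_sq by lra. apply Rmult_le_compat_l; [lra |]. apply exp_le.
  pose proof (ln_fact_bounds i Hi1). pose proof (kl_term_ge (INR i) (z ^ 2) Hz2 Hi). lra.
Qed.

Lemma b_fun_sq_ge (N z : R) (i : nat) : 0 < N -> 0 < z -> (1 <= i)%nat ->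
  N * exp (- ((INR i - z ^ 2) ^ 2 / z ^ 2) - 1) / sqrt (INR i) <= b_fun N i z ^ 2.
Proof.
  intros HN Hz Hi1.
  assert (Hz2 : 0 < z ^ 2) by (apply pow_lt; lra).
  assert (Hi : 0 < INR i) by (apply lt_0_INR; lia).
  rewrite <- (Rpower_sqrt (INR i) Hi), b_fun_sq by lra. unfold Rpower.
  unfold Rdiv. rewrite Rmult_assoc, <- exp_Ropp, <- exp_plus.
  apply Rmult_le_compat_l; [lra |]. apply exp_le.
  pose proof (ln_fact_bounds i Hi1). pose proof (kl_term_le (INR i) (z ^ 2) Hi Hz2). lra.
Qed.

(* With [ln w - ln z <= (w - z) / z], the exponent of [b_fun N i w / b_fun N i z] is at most
   [-(w - z)^2 / 2 + (i - z^2) (w - z) / z], and the window makes the last term small. *)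
Lemma b_fun_far_le (N z w Sw : R) (i : nat) : 0 < z -> 0 < w ->
  4 * Sw <= Rabs (w - z) -> z ^ 2 <= INR i <= z ^ 2 + z * Sw ->
  b_fun N i w <= b_fun N i z * exp (- (w - z) ^ 2 / 4).
Proof.
  intros Hz Hw Hwz Hi.
  rewrite !(b_fun_exp N _ i), Rmult_assoc, <- exp_plus by lra.
  pose proof (sqrt_fact_pos i). pose proof (sqrt_pos N).
  apply Rmult_le_compat_l; [apply Rle_div_r; lra |]. apply exp_le.
  assert (Hln : INR i * (ln w - ln z) <= INR i * ((w - z) / z))
    by (apply Rmult_le_compat_l; [apply pos_INR | apply ln_sub_le; lra]).
  assert (Hwin : (INR i - z ^ 2) * ((w - z) / z) <= (w - z) ^ 2 / 4).
  { destruct (Rle_or_lt z w) as [Hle | Hlt].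
    - rewrite Rabs_pos_eq in Hwz by lra.
      assert ((INR i - z ^ 2) / z <= Sw) by (apply Rle_div_l; lra).
      replace ((INR i - z ^ 2) * ((w - z) / z)) with ((INR i - z ^ 2) / z * (w - z))
        by (field; lra).
      nra.
    - assert ((w - z) / z < 0) by (apply Rdiv_neg_pos; lra). nra. }
  replace (INR i * ((w - z) / z)) with (z * (w - z) + (INR i - z ^ 2) * ((w - z) / z)) in Hln
    by (field; lra).
  nra.
Qed.

Lemma far_comb_le (N z w Sw B Q1 Q2 : R) (i : nat) : 0 < N -> 0 < z -> 0 < w ->
  4 * Sw <= Rabs (w - z) -> z ^ 2 <= INR i <= z ^ 2 + z * Sw ->
  Q1 ^ 2 + Q2 ^ 2 <= B ^ 2 -> 0 <= B ->
  Rabs (Q1 * b_fun N i w + Q2 * c_fun N i w) <=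
  b_fun N i z * (B * (1 + (INR i + w ^ 2) / w) * exp (- (w - z) ^ 2 / 4)).
Proof.
  intros HN Hz Hw Hwz Hi HQ HB.
  rewrite c_fun_eq by lra.
  replace (Q1 * b_fun N i w + Q2 * (b_fun N i w * ((INR i - w ^ 2) / w)))
    with (b_fun N i w * (Q1 + Q2 * ((INR i - w ^ 2) / w))) by ring.
  pose proof (b_fun_pos N w i HN Hw). pose proof (b_fun_pos N z i HN Hz).
  pose proof (b_fun_far_le N z w Sw i Hz Hw Hwz Hi) as Hfar.
  pose proof (exp_pos (- (w - z) ^ 2 / 4)).
  assert (Hs : Rabs ((INR i - w ^ 2) / w) <= (INR i + w ^ 2) / w).
  { unfold Rdiv. rewrite Rabs_mult, Rabs_inv, (Rabs_pos_eq w) by lra.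
    apply Rmult_le_compat_r; [left; apply Rinv_0_lt_compat; lra |].
    apply Rabs_le. pose proof (pos_INR i). pose proof (pow2_ge_0 w). lra. }
  pose proof (comb_abs_le Q1 Q2 ((INR i - w ^ 2) / w) B HQ HB) as Hc.
  rewrite Rabs_mult, Rabs_pos_eq by lra.
  replace (b_fun N i z * (B * (1 + (INR i + w ^ 2) / w) * exp (- (w - z) ^ 2 / 4)))
    with (b_fun N i z * exp (- (w - z) ^ 2 / 4) * (B * (1 + (INR i + w ^ 2) / w))) by ring.
  apply Rmult_le_compat; try lra. apply Rabs_pos.
  pose proof (Rabs_pos (Q1 + Q2 * ((INR i - w ^ 2) / w))). nra.
Qed.

(** * Finite sums and runs of a decaying sequence *)

Fixpoint sum_from (a len : nat) (f : nat -> R) : R :=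
  match len with
  | O => 0
  | S l => sum_from a l f + f (a + l)%nat
  end.

Lemma sum_from_app (a l1 l2 : nat) (f : nat -> R) :
  sum_from a (l1 + l2) f = sum_from a l1 f + sum_from (a + l1) l2 f.
Proof.
  induction l2 as [|l2 IH]; simpl.
  - rewrite Nat.add_0_r. ring.
  - rewrite Nat.add_succ_r. simpl. rewrite IH, Nat.add_assoc. ring.
Qed.

Lemma sum_from_pairs (a q : nat) (f : nat -> R) :
  sum_from a (q + q) f = sum_from a q (fun i => f i + f (i + q)%nat).
Proof.
  rewrite sum_from_app.
  assert (H : forall l, sum_from a l f + sum_from (a + q) l f =
                        sum_from a l (fun i => f i + f (i + q)%nat)).
  { induction l as [|l IH]; simpl; [ring |].
    rewrite <- IH. replace (a + q + l)%nat with (a + l + q)%nat by lia. ring. }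
  apply H.
Qed.

Lemma sum_from_ge (a l : nat) (f : nat -> R) (c : R) :
  (forall k, (k < l)%nat -> c <= f (a + k)%nat) -> INR l * c <= sum_from a l f.
Proof.
  induction l as [|l IH]; intros H; [simpl; lra |].
  cbn [sum_from]. rewrite S_INR.
  pose proof (IH (fun k Hk => H k ltac:(lia))). pose proof (H l ltac:(lia)). lra.
Qed.

Lemma sum_from_nonneg (a l : nat) (f : nat -> R) :
  (forall i, 0 <= f i) -> 0 <= sum_from a l f.
Proof. intros H; induction l; simpl; [lra |]. specialize (H (a + l)%nat). lra. Qed.

Lemma sum1_eq_sum_from (n : nat) (f : nat -> R) : sum1 n f = sum_from 1 n f.
Proof. induction n; simpl; [reflexivity |]. rewrite IHn. reflexivity. Qed.

Lemma sum_from_le_sum1 (n a l : nat) (f : nat -> R) : (forall i, 0 <= f i) ->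
  (1 <= a)%nat -> (a + l <= n + 1)%nat -> sum_from a l f <= sum1 n f.
Proof.
  intros Hf Ha Hn. rewrite sum1_eq_sum_from.
  replace n with ((a - 1) + (l + (n + 1 - a - l)))%nat by lia.
  rewrite !sum_from_app. replace (1 + (a - 1))%nat with a by lia.
  pose proof (sum_from_nonneg 1 (a - 1) f Hf).
  pose proof (sum_from_nonneg (a + l) (n + 1 - a - l) f Hf).
  lra.
Qed.

Lemma exists_least_nat (P : nat -> Prop) :
  (exists n, P n) -> exists n, P n /\ forall m, P m -> (n <= m)%nat.
Proof.
  intros H.
  destruct (dec_inh_nat_subset_has_unique_least_element P (fun n => classic (P n)) H)
    as [n [Hn _]].
  exists n. exact Hn.
Qed.

Section LevelRun.

Variables (F : nat -> R) (rho : R) (a b : nat).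
Hypothesis Hrho : 0 < rho <= 1.
Hypothesis Hstep : forall i, (a <= i < b)%nat -> rho * F i <= F (S i) <= F i.

Lemma run_le_start (j k : nat) : (a <= j)%nat -> (j + k <= b)%nat -> F (j + k)%nat <= F j.
Proof.
  intros Hj. induction k as [|k IH]; intros Hk; rewrite ?Nat.add_0_r; [lra |].
  rewrite Nat.add_succ_r. pose proof (Hstep (j + k) ltac:(lia)). pose proof (IH ltac:(lia)). lra.
Qed.

Lemma run_ge_start (j k : nat) : (a <= j)%nat -> (j + k <= b)%nat ->
  rho ^ k * F j <= F (j + k)%nat.
Proof.
  intros Hj. induction k as [|k IH]; intros Hk; rewrite ?Nat.add_0_r; [simpl; lra |].
  rewrite Nat.add_succ_r, <- tech_pow_Rmult.
  pose proof (Hstep (j + k) ltac:(lia)). pose proof (IH ltac:(lia)). nra.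
Qed.

Lemma level_run (lo hi : R) : 0 < lo -> 2 * lo <= hi -> (a <= b)%nat ->
  2 * lo <= F a -> F b < lo ->
  exists j m, (a <= j)%nat /\ (j + m <= b)%nat /\ rho ^ S m < 1 / 2 /\
    forall i, (j <= i < j + m)%nat -> lo <= F i <= hi.
Proof.
  intros Hlo Hhi Hab Ha Hb.
  destruct (exists_least_nat (fun i => (a <= i <= b)%nat /\ F i <= hi)) as [j [[Hj Fj] Hjmin]].
  { exists b. split; [lia | lra]. }
  destruct (exists_least_nat (fun i => (j <= i <= b)%nat /\ F i < lo)) as [k [[Hk Fk] Hkmin]].
  { exists b. split; [lia | lra]. }
  assert (Hj_ge : 2 * lo * rho <= F j).
  { destruct (Nat.eq_dec j a) as [-> | Hne]; [nra |].
    assert (Hprev : hi < F (j - 1)%nat).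
    { apply Rnot_le_lt. intros Hle.
      specialize (Hjmin (j - 1)%nat ltac:(split; [lia | exact Hle])). lia. }
    pose proof (Hstep (j - 1) ltac:(lia)) as Hs. replace (S (j - 1)) with j in Hs by lia. nra. }
  exists j, (k - j)%nat. repeat split; try lia.
  - pose proof (run_ge_start j (k - j) ltac:(lia) ltac:(lia)) as Hr.
    replace (j + (k - j))%nat with k in Hr by lia.
    rewrite <- tech_pow_Rmult. pose proof (pow_le rho (k - j) ltac:(lra)). nra.
  - apply Rnot_lt_le. intros Hlt. specialize (Hkmin i ltac:(split; [lia | exact Hlt])). lia.
  - pose proof (run_le_start j (i - j) ltac:(lia) ltac:(lia)) as Hr.
    replace (j + (i - j))%nat with i in Hr by lia. lra.
Qed.

End LevelRun.

Lemma run_half_length_ge (z Sw : R) (m : nat) : 0 < Sw -> 8 * Sw <= z ->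
  (1 - Sw / z) ^ S m < 1 / 2 -> z / (8 * Sw) <= INR (Nat.div2 m).
Proof.
  intros HSw Hz Hm.
  assert (Hu : 0 <= Sw / z <= 1) by (split; [apply Rle_div_r | apply Rle_div_l]; lra).
  pose proof (pow_1_minus_ge (Sw / z) (S m) Hu) as Hb. rewrite S_INR in Hb.
  assert (Hq : 1 <= z / (8 * Sw)) by (apply Rle_div_r; lra).
  assert (Hlen : 4 * (z / (8 * Sw)) < INR m + 1).
  { replace (4 * (z / (8 * Sw))) with ((1 / 2) / (Sw / z)) by (field; lra).
    apply Rlt_div_l; [apply Rdiv_lt_0_compat |]; lra. }
  assert (Hdiv : INR m <= 2 * INR (Nat.div2 m) + 1).
  { replace (2 * INR (Nat.div2 m) + 1) with (INR (2 * Nat.div2 m + 1))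
      by (rewrite plus_INR, mult_INR; simpl; ring).
    apply le_INR. pose proof (Nat.div2_odd m). destruct (Nat.odd m); simpl in *; lia. }
  lra.
Qed.

(** * The sum over one window *)

Lemma affine_pair_sq_ge (P1 P2 s w Sw : R) : 1 <= Sw -> 0 <= s -> 0 <= w -> s + w <= Sw ->
  (P1 ^ 2 + P2 ^ 2) * w ^ 2 / (32 * Sw ^ 2) <= (P1 + P2 * s) ^ 2 + (P1 + P2 * (s + w)) ^ 2.
Proof.
  intros HSw Hs Hw Hsw.
  assert (HS2 : 1 <= Sw ^ 2) by nra.
  assert (Hw2 : w ^ 2 <= Sw ^ 2) by nra.
  apply Rle_div_l; [lra |].
  destruct (Rle_or_lt (P1 ^ 2 + P2 ^ 2) (16 * Sw ^ 2 * P2 ^ 2)) as [Hbig | Hsmall].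
  - (* the two values differ by [P2 * w] *)
    pose proof (pow2_ge_0 (2 * (P1 + P2 * s) + P2 * w)).
    assert ((P1 ^ 2 + P2 ^ 2) * w ^ 2 <= 16 * Sw ^ 2 * P2 ^ 2 * w ^ 2)
      by (apply Rmult_le_compat_r; nra).
    nra.
  - (* [P1] dominates, so already [P1 + P2 * s] is large *)
    pose proof (sq_ge_of_approx (P1 + P2 * s) P1 (Rabs (P2 * s)) ltac:(right; f_equal; ring)) as H1.
    rewrite pow2_abs in H1.
    assert ((P2 * s) ^ 2 <= P2 ^ 2 * Sw ^ 2)
      by (rewrite Rpow_mult_distr; apply Rmult_le_compat_l; nra).
    assert ((P1 ^ 2 + P2 ^ 2) * w ^ 2 <= (P1 ^ 2 + P2 ^ 2) * Sw ^ 2)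
      by (apply Rmult_le_compat_l; nra).
    pose proof (pow2_ge_0 (P1 + P2 * (s + w))).
    nra.
Qed.

Lemma pair_sq_ge (p Sw tau eta g1 g2 L1 L2 v1 v2 : R) : 0 < p -> 1 <= Sw -> 0 < tau ->
  tau <= g1 * p * (2 + Sw) <= 1 / 4 -> tau <= g2 * p * (2 + Sw) <= 1 / 4 ->
  Rabs (v1 - g1 * L1) <= g1 * eta -> Rabs (v2 - g2 * L2) <= g2 * eta ->
  p ^ 2 / (2048 * Sw ^ 4) <= L1 ^ 2 + L2 ^ 2 ->
  eta ^ 2 <= p ^ 2 * tau ^ 2 / (1024 * Sw ^ 4) ->
  tau ^ 2 / (8192 * Sw ^ 4 * (2 + Sw) ^ 2) <= v1 ^ 2 + v2 ^ 2.
Proof.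
  intros Hp HSw Htau Hg1 Hg2 Hv1 Hv2 HL Heta.
  set (k := p * (2 + Sw)).
  assert (Hk : 0 < k) by (unfold k; nra).
  assert (HS4 : 0 < Sw ^ 4) by (apply pow_lt; lra).
  assert (Hone : forall g L v, tau <= g * k <= 1 / 4 -> Rabs (v - g * L) <= g * eta ->
            tau ^ 2 * L ^ 2 / 2 - eta ^ 2 / 16 <= k ^ 2 * v ^ 2).
  { intros g L v Hg Hv.
    pose proof (sq_ge_of_approx v (g * L) (g * eta) Hv).
    assert (tau ^ 2 * L ^ 2 <= (g * k) ^ 2 * L ^ 2)
      by (apply Rmult_le_compat_r; [nra | apply pow_incr; lra]).
    assert ((g * k) ^ 2 * eta ^ 2 <= eta ^ 2 / 16)
      by (replace (eta ^ 2 / 16) with ((1 / 4) ^ 2 * eta ^ 2) by field;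
          apply Rmult_le_compat_r; [nra | apply pow_incr; lra]).
    assert (E : k ^ 2 * v ^ 2 >= k ^ 2 * ((g * L) ^ 2 / 2 - (g * eta) ^ 2))
      by (apply Rle_ge, Rmult_le_compat_l; nra).
    nra. }
  pose proof (Hone g1 L1 v1 ltac:(unfold k; lra) Hv1).
  pose proof (Hone g2 L2 v2 ltac:(unfold k; lra) Hv2).
  assert (tau ^ 2 * (p ^ 2 / (2048 * Sw ^ 4)) <= tau ^ 2 * (L1 ^ 2 + L2 ^ 2))
    by (apply Rmult_le_compat_l; nra).
  set (X := tau ^ 2 * p ^ 2 / (8192 * Sw ^ 4)).
  assert (HX1 : tau ^ 2 * (p ^ 2 / (2048 * Sw ^ 4)) = 4 * X) by (unfold X; field; lra).
  assert (HX2 : p ^ 2 * tau ^ 2 / (1024 * Sw ^ 4) = 8 * X) by (unfold X; field; lra).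
  replace (tau ^ 2 / (8192 * Sw ^ 4 * (2 + Sw) ^ 2)) with (X / k ^ 2) by (unfold X, k; field; nra).
  apply Rle_div_l; [nra |].
  nra.
Qed.

Section WindowRun.

Variables (z Sw tau eta p P1 P2 : R) (g v : nat -> R) (ia ib n : nat).
Hypothesis HSw : 1 <= Sw.
Hypothesis Hz : 8 * Sw <= z.
Hypothesis Hg_pos : forall i, 0 < g i.
Hypothesis Hg_succ : forall i, g (S i) = g i * z / sqrt (INR (S i)).
Hypothesis Hia : z ^ 2 <= INR ia.
Hypothesis Hib : INR ib <= z ^ 2 + z * Sw.
Hypothesis Hiab : (ia <= ib)%nat.
Hypothesis Hibn : (ib <= n)%nat.
Hypothesis Hp : 0 < p.
Hypothesis HP : P1 ^ 2 + P2 ^ 2 = p ^ 2.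
Hypothesis Htau : 0 < tau <= 1 / 8.
Hypothesis Hstart : 2 * tau <= g ia * p * (2 + Sw).
Hypothesis Hend : g ib * p * (2 + Sw) < tau.
Hypothesis Heta : 0 <= eta.
Hypothesis Heta2 : eta ^ 2 <= p ^ 2 * tau ^ 2 / (1024 * Sw ^ 4).
Hypothesis Hv : forall i, (ia <= i <= ib)%nat ->
  Rabs (v i - g i * (P1 + P2 * ((INR i - z ^ 2) / z))) <= g i * eta.

Lemma g_succ_le (i : nat) : z ^ 2 <= INR i -> g (S i) <= g i.
Proof.
  intros Hi. rewrite Hg_succ.
  assert (Hs : z <= sqrt (INR (S i))).
  { rewrite <- (sqrt_pow2 z) by lra. apply sqrt_le_1_alt. rewrite S_INR. lra. }
  pose proof (Hg_pos i). apply Rle_div_l; [lra | nra].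
Qed.

Lemma g_succ_ge (i : nat) : INR (S i) <= z ^ 2 + z * Sw -> (1 - Sw / z) * g i <= g (S i).
Proof.
  intros Hi. rewrite Hg_succ.
  set (rho := 1 - Sw / z).
  assert (Hrho : 0 <= rho) by (unfold rho; assert (Sw / z <= 1) by (apply Rle_div_l; lra); lra).
  assert (Hs0 : 0 < sqrt (INR (S i))) by (apply sqrt_lt_R0, lt_0_INR; lia).
  assert (Hs : rho * sqrt (INR (S i)) <= z).
  { apply Rsqr_incr_0_var; [| lra]. rewrite Rsqr_mult, Rsqr_sqrt by apply pos_INR.
    assert (E : rho² * (z ^ 2 + z * Sw) = (z - Sw) * (z ^ 2 - Sw ^ 2) / z)
      by (unfold rho, Rsqr; field; lra).
    assert (rho² * INR (S i) <= rho² * (z ^ 2 + z * Sw))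
      by (apply Rmult_le_compat_l; [apply Rle_0_sqr | lra]).
    assert ((z - Sw) * (z ^ 2 - Sw ^ 2) / z <= z²) by (apply Rle_div_l; unfold Rsqr; nra).
    lra. }
  pose proof (Hg_pos i).
  assert (g i * (rho * sqrt (INR (S i))) <= g i * z) by (apply Rmult_le_compat_l; lra).
  apply Rle_div_r with (c := sqrt (INR (S i))); lra.
Qed.

Lemma eta_le_p : eta <= p.
Proof.
  apply Rsqr_incr_0_var; [| lra]. rewrite !Rsqr_pow2.
  assert (p ^ 2 * tau ^ 2 / (1024 * Sw ^ 4) <= p ^ 2).
  { apply Rle_div_l; [pose proof (pow_lt Sw 4 ltac:(lra)); lra |].
    assert (1 <= Sw ^ 4) by (rewrite <- (pow1 4); apply pow_incr; lra).
    assert (tau ^ 2 <= 1) by nra. pose proof (pow2_ge_0 p). nra. }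
  lra.
Qed.

Lemma distZ_sq_in_zone (i : nat) : (ia <= i <= ib)%nat -> g i * p * (2 + Sw) <= 1 / 4 ->
  distZ (v i) ^ 2 = v i ^ 2.
Proof.
  intros Hi HF. rewrite distZ_abs, pow2_abs; [reflexivity |].
  set (s := (INR i - z ^ 2) / z).
  assert (Hs : 0 <= s <= Sw).
  { pose proof (le_INR _ _ (proj1 Hi)). pose proof (le_INR _ _ (proj2 Hi)).
    split; [apply Rdiv_le_0_compat | apply Rle_div_l]; lra. }
  pose proof (comb_abs_le P1 P2 s p ltac:(lra) ltac:(lra)) as Hc.
  rewrite (Rabs_pos_eq s) in Hc by lra.
  pose proof (Hv i Hi) as Hvi. fold s in Hvi. pose proof eta_le_p. pose proof (Hg_pos i).
  replace (v i) with ((v i - g i * (P1 + P2 * s)) + g i * (P1 + P2 * s)) by ring.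
  eapply Rle_trans; [apply Rabs_triang |]. rewrite Rabs_mult, (Rabs_pos_eq (g i)) by lra.
  assert (g i * Rabs (P1 + P2 * s) <= g i * (p * (1 + Sw))) by (apply Rmult_le_compat_l; nra).
  nra.
Qed.

Lemma zone_pair_ge (i q : nat) : (ia <= i)%nat -> (i + q <= ib)%nat -> z / (8 * Sw) <= INR q ->
  tau <= g i * p * (2 + Sw) <= 1 / 4 -> tau <= g (i + q)%nat * p * (2 + Sw) <= 1 / 4 ->
  tau ^ 2 / (8192 * Sw ^ 4 * (2 + Sw) ^ 2) <= distZ (v i) ^ 2 + distZ (v (i + q)%nat) ^ 2.
Proof.
  intros Hi Hiq Hq HF1 HF2.
  rewrite (distZ_sq_in_zone i), (distZ_sq_in_zone (i + q)) by (lia || lra).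
  set (s := (INR i - z ^ 2) / z). set (w := INR q / z).
  assert (Hsw : (INR (i + q) - z ^ 2) / z = s + w) by (unfold s, w; rewrite plus_INR; field; lra).
  assert (Hs : 0 <= s) by (apply Rdiv_le_0_compat; [pose proof (le_INR _ _ Hi) |]; lra).
  assert (Hw : 1 / (8 * Sw) <= w).
  { unfold w. apply Rle_div_r with (c := z); [lra |].
    replace (1 / (8 * Sw) * z) with (z / (8 * Sw)) by (field; lra). lra. }
  assert (Hw0 : 0 < 1 / (8 * Sw)) by (apply Rdiv_lt_0_compat; lra).
  assert (Hsw_le : s + w <= Sw)
    by (rewrite <- Hsw; apply Rle_div_l; [| pose proof (le_INR _ _ Hiq)]; lra).
  apply (pair_sq_ge p Sw tau eta (g i) (g (i + q)%nat) (P1 + P2 * s) (P1 + P2 * (s + w)));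
    try lra.
  - apply Hv. lia.
  - rewrite <- Hsw. apply Hv. lia.
  - pose proof (affine_pair_sq_ge P1 P2 s w Sw HSw Hs ltac:(lra) Hsw_le) as Hpair.
    rewrite HP in Hpair. eapply Rle_trans; [| exact Hpair].
    assert (1 / (64 * Sw ^ 2) <= w ^ 2)
      by (replace (1 / (64 * Sw ^ 2)) with ((1 / (8 * Sw)) ^ 2) by (field; lra);
          apply pow_incr; lra).
    replace (p ^ 2 / (2048 * Sw ^ 4)) with (p ^ 2 * (1 / (64 * Sw ^ 2)) / (32 * Sw ^ 2))
      by (field; lra).
    apply Rmult_le_compat_r; [left; apply Rinv_0_lt_compat; nra |].
    apply Rmult_le_compat_l; nra.
Qed.

Lemma window_run_sum_ge :
  z / (8 * Sw) * (tau ^ 2 / (8192 * Sw ^ 4 * (2 + Sw) ^ 2)) <= sum1 n (fun i => distZ (v i) ^ 2).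
Proof.
  set (F := fun i => g i * p * (2 + Sw)).
  assert (Hrho : 0 < 1 - Sw / z <= 1).
  { assert (0 < Sw / z <= 1 / 8) by (split; [apply Rdiv_lt_0_compat | apply Rle_div_l]; lra). lra. }
  assert (Hstep : forall i, (ia <= i < ib)%nat -> (1 - Sw / z) * F i <= F (S i) <= F i).
  { intros i Hi. unfold F. assert (0 < p * (2 + Sw)) by nra.
    pose proof (le_INR _ _ (proj1 Hi)). pose proof (le_INR _ _ (proj2 Hi)).
    pose proof (g_succ_le i ltac:(lra)). pose proof (g_succ_ge i ltac:(lra)). nra. }
  destruct (level_run F (1 - Sw / z) ia ib Hrho Hstep tau (1 / 4) ltac:(lra) ltac:(lra) Hiab
              Hstart Hend) as [j [m [Hj [Hjm [Hlen Hzone]]]]].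
  set (q := Nat.div2 m).
  pose proof (run_half_length_ge z Sw m ltac:(lra) Hz Hlen) as Hq.
  assert (Hm : (q + q <= m)%nat) by (pose proof (Nat.div2_odd m); unfold q; lia).
  assert (Hia1 : (1 <= ia)%nat) by (destruct ia; [simpl in Hia; nra | lia]).
  eapply Rle_trans; [| apply (sum_from_le_sum1 n j (q + q)); [intros; apply pow2_ge_0 | lia | lia]].
  rewrite sum_from_pairs.
  eapply Rle_trans; [| apply sum_from_ge; intros k Hk; apply (zone_pair_ge (j + k) q); try lia].
  - apply Rmult_le_compat_r; [| exact Hq]. apply Rle_div_r; [| rewrite Rmult_0_l; nra].
    assert (0 < Sw ^ 4) by (apply pow_lt; lra). nra.
  - exact Hq.
  - apply Hzone. lia.
  - rewrite <- Nat.add_assoc. apply Hzone. lia.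
Qed.

End WindowRun.

Lemma window_start_ge (N z K r tau Sw p : R) (a : nat) : 1 <= N -> 1 <= z -> z + 1 <= K * N ->
  z ^ 2 <= INR a < z ^ 2 + 1 -> r ^ 2 / 2 <= p ^ 2 -> 0 <= p -> 1 <= Sw -> 0 < tau ->
  exp 2 * K * tau ^ 2 <= r ^ 2 -> 2 * tau <= b_fun N a z * p * (2 + Sw).
Proof.
  intros HN Hz HK Ha Hp Hp0 HSw Htau Hr.
  assert (Ha1 : (1 <= a)%nat) by (destruct a; [simpl in Ha; nra | lia]).
  pose proof (b_fun_sq_ge N z a ltac:(lra) ltac:(lra) Ha1) as Hb.
  pose proof (b_fun_pos N z a ltac:(lra) ltac:(lra)).
  assert (Hsa : 0 < sqrt (INR a) <= z + 1).
  { split; [apply sqrt_lt_R0; nra |].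
    rewrite <- (sqrt_pow2 (z + 1)) by lra. apply sqrt_le_1_alt. nra. }
  assert (Hexp : / exp 2 <= exp (- ((INR a - z ^ 2) ^ 2 / z ^ 2) - 1)).
  { rewrite <- exp_Ropp. apply exp_le.
    assert ((INR a - z ^ 2) ^ 2 / z ^ 2 <= 1) by (apply Rle_div_l; nra). lra. }
  assert (He : 0 < exp 2) by apply exp_pos.
  assert (HK0 : 0 < K) by nra.
  (* [b_fun N a z ^ 2 >= N exp (-2) / (z + 1) >= exp (-2) / K] *)
  assert (Hb2 : / (exp 2 * K) <= b_fun N a z ^ 2).
  { eapply Rle_trans; [| exact Hb].
    replace (/ (exp 2 * K)) with (/ exp 2 * N / (K * N)) by (field; nra).
    pose proof (Rinv_0_lt_compat _ He).
    assert (/ exp 2 * N <= N * exp (- ((INR a - z ^ 2) ^ 2 / z ^ 2) - 1)) by nra.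
    assert (/ (K * N) <= / sqrt (INR a)) by (apply Rinv_le_contravar; lra).
    apply Rmult_le_compat; try lra; [nra | left; apply Rinv_0_lt_compat; nra]. }
  apply Rsqr_incr_0_var; [| apply Rmult_le_pos; [apply Rmult_le_pos |]; lra]. rewrite !Rsqr_pow2.
  replace ((b_fun N a z * p * (2 + Sw)) ^ 2) with (b_fun N a z ^ 2 * p ^ 2 * (2 + Sw) ^ 2) by ring.
  assert (Htau2 : tau ^ 2 <= r ^ 2 * / (exp 2 * K))
    by (apply Rle_div_r with (c := exp 2 * K); [nra | lra]).
  assert (9 <= (2 + Sw) ^ 2) by nra.
  assert (r ^ 2 / 2 * / (exp 2 * K) <= p ^ 2 * b_fun N a z ^ 2)
    by (apply Rmult_le_compat; try lra; [apply Rle_div_r; nra | left; apply Rinv_0_lt_compat; nra]).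
  nra.
Qed.

Lemma window_end_lt (N z U tau Sw p : R) (b : nat) : 0 < N -> 0 < z -> 1 <= Sw -> Sw <= z ->
  z ^ 2 + z * Sw / 2 <= INR b <= z ^ 2 + z * Sw -> p ^ 2 <= U -> 0 <= p ->
  0 < tau -> N * U * 9 * Sw ^ 2 * exp (- (Sw ^ 2 / 12)) < tau ^ 2 ->
  b_fun N b z * p * (2 + Sw) < tau.
Proof.
  intros HN Hz HSw Hzs Hb Hp Hp0 Htau Hsmall.
  assert (Hz2 : z ^ 2 <= INR b) by nra.
  pose proof (b_fun_sq_le N z b HN Hz Hz2) as Hb2.
  pose proof (b_fun_pos N z b HN Hz).
  assert (Hgap : Sw ^ 2 / 12 <= (INR b - z ^ 2) ^ 2 / (INR b + z ^ 2)).
  { apply Rle_div_r with (c := INR b + z ^ 2); [nra |].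
    assert ((z * Sw / 2) ^ 2 <= (INR b - z ^ 2) ^ 2) by (apply pow_incr; nra).
    assert (Sw ^ 2 / 12 * (INR b + z ^ 2) <= Sw ^ 2 / 12 * (3 * z ^ 2))
      by (apply Rmult_le_compat_l; nra).
    nra. }
  assert (Hexp : b_fun N b z ^ 2 <= N * exp (- (Sw ^ 2 / 12))).
  { eapply Rle_trans; [exact Hb2 |]. apply Rmult_le_compat_l; [lra |]. apply exp_le. lra. }
  pose proof (exp_pos (- (Sw ^ 2 / 12))).
  apply Rsqr_incrst_0; [| apply Rmult_le_pos; [apply Rmult_le_pos |] | ]; try lra.
  rewrite !Rsqr_pow2.
  apply Rle_lt_trans with (N * U * 9 * Sw ^ 2 * exp (- (Sw ^ 2 / 12))); [| lra].
  replace ((b_fun N b z * p * (2 + Sw)) ^ 2) with (b_fun N b z ^ 2 * p ^ 2 * (2 + Sw) ^ 2) by ring.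
  assert ((2 + Sw) ^ 2 <= 9 * Sw ^ 2) by nra.
  assert (b_fun N b z ^ 2 * p ^ 2 <= N * exp (- (Sw ^ 2 / 12)) * U)
    by (apply Rmult_le_compat; nra).
  assert (b_fun N b z ^ 2 * p ^ 2 * (2 + Sw) ^ 2 <= N * exp (- (Sw ^ 2 / 12)) * U * (9 * Sw ^ 2))
    by (apply Rmult_le_compat; nra).
  nra.
Qed.

Lemma window_sum_ge (N z Sw K U tau eta r P1 P2 : R) (n : nat) (v : nat -> R) :
  1 <= N -> 1 <= Sw -> 8 * Sw <= z -> z + 1 <= K * N ->
  0 < r -> r ^ 2 / 2 <= P1 ^ 2 + P2 ^ 2 <= U -> 0 < tau <= 1 / 8 -> exp 2 * K * tau ^ 2 <= r ^ 2 ->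
  N * U * 9 * Sw ^ 2 * exp (- (Sw ^ 2 / 12)) < tau ^ 2 -> z ^ 2 + z * Sw <= INR n ->
  0 <= eta -> 64 * eta * Sw ^ 2 <= r * tau ->
  (forall i : nat, z ^ 2 <= INR i <= z ^ 2 + z * Sw ->
     Rabs (v i - b_fun N i z * (P1 + P2 * ((INR i - z ^ 2) / z))) <= b_fun N i z * eta) ->
  z / (8 * Sw) * (tau ^ 2 / (8192 * Sw ^ 4 * (2 + Sw) ^ 2)) <= sum1 n (fun i => distZ (v i) ^ 2).
Proof.
  intros HN HSw Hz HK Hr0 HP Htau Hr Hsmall Hn Heta Heta_r Hv.
  assert (Hz2 : 64 <= z ^ 2) by nra.
  destruct (nfloor1_ex (z ^ 2) ltac:(lra)) as [a0 Ha0].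
  destruct (nfloor_ex (z ^ 2 + z * Sw) ltac:(nra)) as [ib Hib].
  set (ia := S a0). assert (Hia : z ^ 2 <= INR ia < z ^ 2 + 1) by (unfold ia; rewrite S_INR; lra).
  set (p := sqrt (P1 ^ 2 + P2 ^ 2)).
  assert (Hp2 : P1 ^ 2 + P2 ^ 2 = p ^ 2) by (unfold p; rewrite pow2_sqrt; nra).
  assert (Hp : 0 < p) by (apply sqrt_lt_R0; nra).
  assert (HzSw : 8 <= z * Sw) by nra.
  assert (Hend : b_fun N ib z * p * (2 + Sw) < tau)
    by (apply (window_end_lt N z U tau Sw p ib); lra).
  assert (Heta2 : eta ^ 2 <= p ^ 2 * tau ^ 2 / (1024 * Sw ^ 4)).
  { pose proof (pow_lt Sw 4 ltac:(lra)).
    apply Rle_div_r with (c := 1024 * Sw ^ 4); [lra |].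
    assert ((64 * eta * Sw ^ 2) ^ 2 <= (r * tau) ^ 2) by (apply pow_incr; nra).
    assert (r ^ 2 * tau ^ 2 <= 2 * p ^ 2 * tau ^ 2) by (apply Rmult_le_compat_r; nra).
    nra. }
  apply (window_run_sum_ge z Sw tau eta p P1 P2 (fun i => b_fun N i z) v ia ib n HSw Hz
           (fun i => b_fun_pos N z i ltac:(lra) ltac:(lra)) (fun i => b_fun_succ N z i ltac:(lra)));
    try lra.
  - apply INR_le. nra.
  - apply INR_le. lra.
  - apply (window_start_ge N z K r tau Sw p ia); lra.
  - intros i [Hi1 Hi2]. apply le_INR in Hi1, Hi2. apply Hv. lra.
Qed.

Lemma dominant_window (N x y Sw B r D1 D2 D3 D4 : R) :
  0 < N -> 0 < x -> x < y -> Sw <= x -> 4 * Sw <= y - x -> 0 <= B ->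
  r ^ 2 <= D1 ^ 2 + D2 ^ 2 + D3 ^ 2 + D4 ^ 2 <= B ^ 2 ->
  exists z P1 P2, x <= z <= y /\ r ^ 2 / 2 <= P1 ^ 2 + P2 ^ 2 <= B ^ 2 /\
    forall i : nat, z ^ 2 <= INR i <= z ^ 2 + z * Sw ->
      Rabs (D1 * b_fun N i x + D2 * c_fun N i x + D3 * b_fun N i y + D4 * c_fun N i y
            - b_fun N i z * (P1 + P2 * ((INR i - z ^ 2) / z)))
      <= b_fun N i z * (B * (1 + 3 * y ^ 2 / x) * exp (- (y - x) ^ 2 / 4)).
Proof.
  intros HN Hx Hxy HSw Hsep HB HD.
  assert (Hfar : forall z w Q1 Q2 (i : nat), (z = x /\ w = y) \/ (z = y /\ w = x) ->
            Q1 ^ 2 + Q2 ^ 2 <= B ^ 2 -> z ^ 2 <= INR i <= z ^ 2 + z * Sw ->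
            Rabs (Q1 * b_fun N i w + Q2 * c_fun N i w) <=
            b_fun N i z * (B * (1 + 3 * y ^ 2 / x) * exp (- (y - x) ^ 2 / 4))).
  { intros z w Q1 Q2 i Hzw HQ Hi.
    assert (Hz : x <= z <= y) by (destruct Hzw as [[-> ->] | [-> ->]]; lra).
    assert (Hw : x <= w <= y) by (destruct Hzw as [[-> ->] | [-> ->]]; lra).
    assert (Hwz : (w - z) ^ 2 = (y - x) ^ 2) by (destruct Hzw as [[-> ->] | [-> ->]]; ring).
    assert (Hsep' : 4 * Sw <= Rabs (w - z))
      by (destruct Hzw as [[-> ->] | [-> ->]]; [rewrite Rabs_pos_eq | rewrite Rabs_left]; lra).
    eapply Rle_trans; [apply (far_comb_le N z w Sw B Q1 Q2 i); lra |].
    rewrite Hwz. apply Rmult_le_compat_l; [left; apply b_fun_pos; lra |].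
    apply Rmult_le_compat_r; [left; apply exp_pos |]. apply Rmult_le_compat_l; [lra |].
    (* [i <= z^2 + z Sw <= 2 y^2] and [w >= x] *)
    assert ((INR i + w ^ 2) / w <= 3 * y ^ 2 / w)
      by (apply Rmult_le_compat_r; [left; apply Rinv_0_lt_compat |]; nra).
    assert (3 * y ^ 2 / w <= 3 * y ^ 2 / x)
      by (apply Rmult_le_compat_l; [nra | apply Rinv_le_contravar; lra]).
    lra. }
  destruct (Rle_or_lt (r ^ 2 / 2) (D1 ^ 2 + D2 ^ 2)) as [Hx_dom | Hy_dom].
  - exists x, D1, D2. split; [lra | split; [nra |]]. intros i Hi.
    replace (D1 * b_fun N i x + D2 * c_fun N i x + D3 * b_fun N i y + D4 * c_fun N i y -
             b_fun N i x * (D1 + D2 * ((INR i - x ^ 2) / x)))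
      with (D3 * b_fun N i y + D4 * c_fun N i y) by (rewrite (c_fun_eq N x i) by lra; ring).
    apply Hfar; [left; split | nra |]; auto.
  - exists y, D3, D4. split; [lra | split; [nra |]]. intros i Hi.
    replace (D1 * b_fun N i x + D2 * c_fun N i x + D3 * b_fun N i y + D4 * c_fun N i y -
             b_fun N i y * (D3 + D4 * ((INR i - y ^ 2) / y)))
      with (D1 * b_fun N i x + D2 * c_fun N i x) by (rewrite (c_fun_eq N y i) by lra; ring).
    apply Hfar; [right; split | nra |]; auto.
Qed.

Lemma Rpower_pow_mul (M a : R) (k : nat) : 0 < M -> Rpower M a ^ k = Rpower M (a * INR k).
Proof. intros HM. rewrite <- Rpower_pow by apply exp_pos. apply Rpower_mult. Qed.

Lemma far_factor_le (c1 c2 M x y eps B : R) : 0 < c1 -> 1 <= M -> 0 <= B ->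
  c1 * M <= x -> x < y -> y <= c2 * M -> Rpower M eps <= y - x ->
  B * (1 + 3 * y ^ 2 / x) * exp (- (y - x) ^ 2 / 4) <=
  (1 + 3 * c2 ^ 2 / c1) * (B * M) * exp (- (1 / 4 * Rpower M (2 * eps))).
Proof.
  intros Hc1 HM HB Hx Hxy Hy Hsep.
  assert (Hx0 : 0 < x) by nra.
  assert (Hratio : 3 * y ^ 2 / x <= 3 * c2 ^ 2 / c1 * M).
  { apply Rle_div_l with (c := x); [lra |].
    assert (y ^ 2 <= (c2 * M) ^ 2) by (apply pow_incr; lra).
    replace (3 * c2 ^ 2 / c1 * M * x) with (3 * (c2 * M) ^ 2 * (x / (c1 * M))) by (field; lra).
    assert (1 <= x / (c1 * M)) by (apply Rle_div_r with (c := c1 * M); nra).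
    nra. }
  assert (Hexp : exp (- (y - x) ^ 2 / 4) <= exp (- (1 / 4 * Rpower M (2 * eps)))).
  { apply exp_le.
    replace (Rpower M (2 * eps)) with (Rpower M eps ^ 2)
      by (rewrite Rpower_pow_mul by lra; f_equal; simpl; ring).
    assert (Rpower M eps ^ 2 <= (y - x) ^ 2)
      by (apply pow_incr; split; [left; apply exp_pos | lra]).
    lra. }
  assert (H3 : 0 <= 3 * c2 ^ 2 / c1) by (apply Rdiv_le_0_compat; nra).
  assert (0 <= 3 * y ^ 2 / x) by (apply Rdiv_le_0_compat; nra).
  assert (B * (3 * y ^ 2 / x) <= B * (3 * c2 ^ 2 / c1 * M)) by (apply Rmult_le_compat_l; lra).
  apply Rmult_le_compat; try lra; [apply Rmult_le_pos; lra | left; apply exp_pos | nra].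
Qed.

Lemma window_bound_ge (c z M Sw tau : R) : 0 < c -> 0 <= M -> 1 <= Sw -> c * M <= z ->
  c * tau ^ 2 * (M / Sw ^ 7) / 589824 <= z / (8 * Sw) * (tau ^ 2 / (8192 * Sw ^ 4 * (2 + Sw) ^ 2)).
Proof.
  intros Hc HM HSw Hz.
  assert (HS4 : 0 < 8192 * Sw ^ 4) by (pose proof (pow_lt Sw 4); lra).
  assert (H1 : c * M / (8 * Sw) <= z / (8 * Sw))
    by (apply Rmult_le_compat_r; [left; apply Rinv_0_lt_compat |]; lra).
  assert (H2 : tau ^ 2 / (8192 * Sw ^ 4 * (9 * Sw ^ 2)) <=
              tau ^ 2 / (8192 * Sw ^ 4 * (2 + Sw) ^ 2)).
  { apply Rmult_le_compat_l; [apply pow2_ge_0 |].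
    apply Rinv_le_contravar; [apply Rmult_lt_0_compat; nra |].
    apply Rmult_le_compat_l; nra. }
  replace (c * tau ^ 2 * (M / Sw ^ 7) / 589824)
    with (c * M / (8 * Sw) * (tau ^ 2 / (8192 * Sw ^ 4 * (9 * Sw ^ 2)))) by (field; lra).
  apply Rmult_le_compat; try lra.
  - apply Rdiv_le_0_compat; nra.
  - apply Rdiv_le_0_compat; [apply pow2_ge_0 | nra].
Qed.

(** * Large [N] *)

Lemma eventually_ge (a : R) : Rbar_locally p_infty (fun N => a <= N).
Proof. exists a. intros N HN. lra. Qed.

Lemma eventually_pow_le (K a b : R) : a < b ->
  Rbar_locally p_infty (fun N => K * Rpower N a <= Rpower N b).
Proof.
  intros Hab. set (L := Rmax 1 K).
  exists (Rpower L (/ (b - a))). intros N HN.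
  assert (HL : 1 <= L) by apply Rmax_l.
  assert (HN0 : 0 < N) by (pose proof (exp_pos (/ (b - a) * ln L)); unfold Rpower in HN; lra).
  assert (HLN : L <= Rpower N (b - a)).
  { replace L with (Rpower (Rpower L (/ (b - a))) (b - a)) at 1
      by (rewrite Rpower_mult, Rinv_l, Rpower_1; lra).
    apply Rle_Rpower_l; [lra |]. split; [apply exp_pos | lra]. }
  replace b with ((b - a) + a) by ring. rewrite Rpower_plus.
  pose proof (exp_pos (a * ln N)). assert (K <= L) by apply Rmax_r.
  unfold Rpower at 1 3. nra.
Qed.

Lemma ln_le_Rpower (N b : R) : 0 < b -> ln N <= Rpower N b / b.
Proof.
  intros Hb. apply Rle_div_r with (c := b); [lra |].
  pose proof (ln_le_sub1 (Rpower N b) (exp_pos _)) as H. rewrite ln_Rpower in H. lra.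
Qed.

Lemma eventually_ln_le (K b : R) : 0 < b ->
  Rbar_locally p_infty (fun N => K * ln N <= Rpower N b).
Proof.
  intros Hb.
  apply (filter_imp (fun N => 1 <= N /\ Rabs K * (2 / b) * Rpower N (b / 2) <= Rpower N b)).
  2: { apply filter_and; [apply eventually_ge | apply eventually_pow_le; lra]. }
  intros N [HN H].
  assert (Hln : 0 <= ln N)
    by (rewrite <- ln_1; destruct HN as [HN | <-]; [left; apply ln_increasing |]; lra).
  pose proof (ln_le_Rpower N (b / 2) ltac:(lra)).
  assert (K * ln N <= Rabs K * ln N) by (apply Rmult_le_compat_r; [lra | apply Rle_abs]).
  assert (Rabs K * ln N <= Rabs K * (Rpower N (b / 2) / (b / 2)))
    by (apply Rmult_le_compat_l; [apply Rabs_pos | lra]).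
  replace (Rabs K * (Rpower N (b / 2) / (b / 2))) with (Rabs K * (2 / b) * Rpower N (b / 2)) in *
    by (field; lra).
  lra.
Qed.

Lemma eventually_exp_small (K m k c t : R) : 0 < k -> 0 < c -> 0 < t ->
  Rbar_locally p_infty (fun N => K * Rpower N m * exp (- (k * Rpower N c)) <= t).
Proof.
  intros Hk Hc Ht.
  set (L := ln (Rabs K / t + 1)).
  assert (HK : 0 <= Rabs K / t) by (apply Rdiv_le_0_compat; [apply Rabs_pos | lra]).
  apply (filter_imp (fun N => (2 * m / k) * ln N <= Rpower N c /\
                              (2 / k * L) * Rpower N 0 <= Rpower N c)).
  2: { apply filter_and; [apply eventually_ln_le | apply eventually_pow_le]; lra. }
  intros N [H1 H2].
  replace (Rpower N 0) with 1 in H2 by (unfold Rpower; rewrite Rmult_0_l, exp_0; reflexivity).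
  (* [N ^ m exp (- k N ^ c) <= exp (- k N ^ c / 2) <= exp (- L) = t / (|K| + t)] *)
  assert (Hexp : Rpower N m * exp (- (k * Rpower N c)) <= exp (- L)).
  { unfold Rpower at 1. rewrite <- exp_plus. apply exp_le.
    assert (m * ln N <= k / 2 * Rpower N c)
      by (replace (m * ln N) with (k / 2 * (2 * m / k * ln N)) by (field; lra);
          apply Rmult_le_compat_l; lra).
    assert (L <= k / 2 * Rpower N c)
      by (replace L with (k / 2 * (2 / k * L)) by (field; lra); apply Rmult_le_compat_l; lra).
    lra. }
  assert (HL : Rabs K * exp (- L) <= t).
  { unfold L. rewrite exp_Ropp, exp_ln by lra.
    apply Rle_div_l with (c := Rabs K / t + 1); [lra |].
    replace (t * (Rabs K / t + 1)) with (Rabs K + t) by (field; lra). lra. }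
  assert (HX : 0 <= Rpower N m * exp (- (k * Rpower N c)))
    by (apply Rmult_le_pos; left; apply exp_pos).
  assert (K * (Rpower N m * exp (- (k * Rpower N c))) <=
          Rabs K * (Rpower N m * exp (- (k * Rpower N c))))
    by (apply Rmult_le_compat_r; [lra | apply Rle_abs]).
  assert (Rabs K * (Rpower N m * exp (- (k * Rpower N c))) <= Rabs K * exp (- L))
    by (apply Rmult_le_compat_l; [apply Rabs_pos | lra]).
  rewrite Rmult_assoc. lra.
Qed.

Lemma exists_small_tau (K r : R) : 0 < K -> 0 < r ->
  exists tau, 0 < tau <= 1 / 8 /\ exp 2 * K * tau ^ 2 <= r ^ 2.
Proof.
  intros HK Hr.
  assert (HeK : 0 < exp 2 * K) by (pose proof (exp_pos 2); nra).
  set (s := sqrt (exp 2 * K)).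
  assert (Hs : 0 < s) by (apply sqrt_lt_R0; lra).
  exists (Rmin (1 / 8) (r / s)). split.
  - split; [apply Rmin_glb_lt; [| apply Rdiv_lt_0_compat] | apply Rmin_l]; lra.
  - assert (Rmin (1 / 8) (r / s) * s <= r) by (apply Rle_div_r; [| apply Rmin_r]; lra).
    assert ((Rmin (1 / 8) (r / s) * s) ^ 2 <= r ^ 2)
      by (apply pow_incr; split;
          [apply Rmult_le_pos; [apply Rmin_glb; [| apply Rdiv_le_0_compat] |] |]; lra).
    rewrite Rpow_mult_distr in *. unfold s in *. rewrite pow2_sqrt in * by lra. lra.
Qed.

Lemma eventually_scale_conditions (c1 c2 A K r tau th eps : R) : 0 < th -> th < eps ->
  7 * th < 1 -> 0 < r -> 0 < tau ->
  Rbar_locally p_infty (fun M =>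
    1 <= M /\ (8 / c1 + 1) * Rpower M th <= Rpower M 1 /\ 4 * Rpower M th <= Rpower M eps /\
    9 * Rpower M (1 + A + 2 * th) * exp (- (1 / 12 * Rpower M (2 * th))) <= tau ^ 2 / 2 /\
    64 * (1 + 3 * c2 ^ 2 / c1) * Rpower M (A / 2 + 1 + 2 * th)
      * exp (- (1 / 4 * Rpower M (2 * eps))) <= r * tau /\
    K * ln M <= Rpower M (1 - 7 * th)).
Proof.
  intros Hth Heps H7 Hr Htau.
  repeat apply filter_and.
  - apply eventually_ge.
  - apply eventually_pow_le. lra.
  - apply eventually_pow_le. lra.
  - apply eventually_exp_small; nra.
  - apply eventually_exp_small; nra.
  - apply eventually_ln_le. lra.
Qed.

Lemma mul_lt_of_le_half (C L W k s : R) : 0 < k -> 0 < W ->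
  2 * C / k * L <= W -> k * W <= s -> C * L < s.
Proof.
  intros Hk HW HL Hs.
  replace (C * L) with (k / 2 * (2 * C / k * L)) by (field; lra).
  assert (k / 2 * (2 * C / k * L) <= k / 2 * W) by (apply Rmult_le_compat_l; lra).
  nra.
Qed.

Lemma window_width_facts (c1 M th : R) : 0 < c1 -> 1 <= M -> 0 <= th ->
  (8 / c1 + 1) * Rpower M th <= M ->
  1 <= Rpower M th /\ 8 * Rpower M th <= c1 * M /\ Rpower M th <= M.
Proof.
  intros Hc1 HM Hth Hscale.
  assert (HSw : 1 <= Rpower M th) by (rewrite <- (Rpower_O M ltac:(lra)); apply Rle_Rpower; lra).
  assert (0 <= 8 / c1 * Rpower M th) by (apply Rmult_le_pos; [apply Rdiv_le_0_compat |]; lra).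
  repeat split; try lra.
  replace (8 * Rpower M th) with (c1 * (8 / c1 * Rpower M th)) by (field; lra).
  apply Rmult_le_compat_l; lra.
Qed.

Lemma window_le_n (z Sw : R) (n : nat) : 0 <= z -> 0 <= Sw -> z + Sw <= sqrt (INR n) ->
  z ^ 2 + z * Sw <= INR n.
Proof.
  intros Hz HSw Hn.
  assert ((z + Sw) ^ 2 <= sqrt (INR n) ^ 2) by (apply pow_incr; lra).
  rewrite pow2_sqrt in * by apply pos_INR. nra.
Qed.

Lemma sum_lower_bound (c1 c2 A r tau th eps M x y D1 D2 D3 D4 : R) (n : nat) :
  0 < c1 -> 0 < r -> 0 < tau <= 1 / 8 -> exp 2 * (c2 + 1) * tau ^ 2 <= r ^ 2 ->
  1 <= M -> 0 <= th ->
  (8 / c1 + 1) * Rpower M th <= Rpower M 1 ->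
  4 * Rpower M th <= Rpower M eps ->
  9 * Rpower M (1 + A + 2 * th) * exp (- (1 / 12 * Rpower M (2 * th))) <= tau ^ 2 / 2 ->
  64 * (1 + 3 * c2 ^ 2 / c1) * Rpower M (A / 2 + 1 + 2 * th)
    * exp (- (1 / 4 * Rpower M (2 * eps))) <= r * tau ->
  c2 * M <= sqrt (INR n) - M ->
  c1 * M <= x -> x < y -> y <= c2 * M -> Rpower M eps <= Rabs (x - y) ->
  r ^ 2 <= D1 ^ 2 + D2 ^ 2 + D3 ^ 2 + D4 ^ 2 <= Rpower M A ->
  c1 * tau ^ 2 / 589824 * Rpower M (1 - 7 * th) <=
  sum1 n (fun i => distZ (D1 * b_fun M i x + D2 * c_fun M i x
                          + D3 * b_fun M i y + D4 * c_fun M i y) ^ 2).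
Proof.
  intros Hc1 Hr Htau Htau_r HM Hth Hscale Hsep_scale Hstart_scale Hfar_scale Hn Hx Hxy Hy Hsep HD.
  assert (HM0 : 0 < M) by lra.
  rewrite Rpower_1 in Hscale by lra.
  rewrite Rabs_minus_sym, Rabs_pos_eq in Hsep by lra.
  assert (Hpow : forall a k, Rpower M a ^ k = Rpower M (a * INR k))
    by (intros; apply Rpower_pow_mul; lra).
  destruct (window_width_facts c1 M th Hc1 HM Hth Hscale) as [HSw [H8 HSwM]].
  set (Sw := Rpower M th) in *.
  assert (HSw2 : Sw ^ 2 = Rpower M (2 * th)) by (unfold Sw; rewrite Hpow; f_equal; simpl; ring).
  set (B := Rpower M (A / 2)).
  assert (HB2 : B ^ 2 = Rpower M A) by (unfold B; rewrite Hpow; f_equal; simpl; field).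
  assert (HB : 0 <= B) by (left; apply exp_pos).
  destruct (dominant_window M x y Sw B r D1 D2 D3 D4) as [z [P1 [P2 [Hz [HP Hv]]]]];
    try rewrite HB2; try lra.
  set (eta := B * (1 + 3 * y ^ 2 / x) * exp (- (y - x) ^ 2 / 4)) in Hv.
  assert (Heta : 0 <= eta).
  { apply Rmult_le_pos; [apply Rmult_le_pos; [lra |] | left; apply exp_pos].
    assert (0 <= 3 * y ^ 2 / x) by (apply Rdiv_le_0_compat; nra). lra. }
  assert (Heta_r : 64 * eta * Sw ^ 2 <= r * tau).
  { eapply Rle_trans; [| exact Hfar_scale].
    replace (Rpower M (A / 2 + 1 + 2 * th)) with (B * M * Sw ^ 2)
      by (rewrite HSw2, !Rpower_plus, Rpower_1 by lra; reflexivity).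
    pose proof (far_factor_le c1 c2 M x y eps B Hc1 HM HB Hx Hxy Hy Hsep).
    assert (0 <= Sw ^ 2) by apply pow2_ge_0. fold eta in H. nra. }
  assert (Hsmall : M * Rpower M A * 9 * Sw ^ 2 * exp (- (Sw ^ 2 / 12)) < tau ^ 2).
  { replace (M * Rpower M A * 9 * Sw ^ 2) with (9 * Rpower M (1 + A + 2 * th))
      by (rewrite HSw2, !Rpower_plus, Rpower_1 by lra; ring).
    replace (- (Sw ^ 2 / 12)) with (- (1 / 12 * Rpower M (2 * th))) by (rewrite HSw2; field).
    nra. }
  assert (Hwin : z ^ 2 + z * Sw <= INR n) by (apply window_le_n; lra).
  eapply Rle_trans;
    [| apply (window_sum_ge M z Sw (c2 + 1) (Rpower M A) tau eta r P1 P2 n); try lra; try nra].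
  - replace (c1 * tau ^ 2 / 589824 * Rpower M (1 - 7 * th))
      with (c1 * tau ^ 2 * (M / Sw ^ 7) / 589824).
    + apply window_bound_ge; lra.
    + unfold Sw. rewrite Hpow. unfold Rminus. rewrite Rpower_plus, Rpower_Ropp, Rpower_1 by lra.
      replace (th * INR 7) with (7 * th) by (simpl; ring). field. apply Rgt_not_eq, exp_pos.
  - exact Hv.
Qed.

Theorem theorem3p17 (c1 c2 A C eps_g r : R) :
  0 < c1 -> c1 < c2 -> 0 < A -> 0 < C -> 0 < eps_g -> eps_g < 1 / 2 -> 0 < r ->
  exists N0 : R, forall (n : nat) (M : R),
    N0 <= M ->
    (* I_W = [c1 M, c2 M] is contained in [0, sqrt n - M] *)
    c2 * M <= sqrt (INR n) - M ->
    let N := M in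
    forall x y : R,
      c1 * M <= x -> x < y -> y <= c2 * M ->
      Rpower N eps_g <= Rabs (x - y) ->
      ~ (exists D1 D2 D3 D4 : R,
            r ^ 2 <= D1 ^ 2 + D2 ^ 2 + D3 ^ 2 + D4 ^ 2 <= Rpower N A /\
            sum1 n (fun i => (distZ (D1 * b_fun N i x + D2 * c_fun N i x
                                     + D3 * b_fun N i y + D4 * c_fun N i y)) ^ 2)
              <= C * ln N).
Proof.
  intros Hc1 Hc12 _ _ He He2 Hr.
  set (th := eps_g / 8).
  destruct (exists_small_tau (c2 + 1) r ltac:(lra) Hr) as [tau [Htau Htau_r]].
  set (k := c1 * tau ^ 2 / 589824).
  assert (Hk : 0 < k)
    by (apply Rdiv_lt_0_compat; [apply Rmult_lt_0_compat; [| apply pow_lt] |]; lra).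
  destruct (eventually_scale_conditions c1 c2 A (2 * C / k) r tau th eps_g ltac:(unfold th; lra)
              ltac:(unfold th; lra) ltac:(unfold th; lra) Hr ltac:(lra)) as [N0 HN0].
  exists (N0 + 1). intros n M HM Hn. cbv zeta.
  intros x y Hx Hxy Hy Hsep [D1 [D2 [D3 [D4 [HD Hsum]]]]].
  destruct (HN0 M ltac:(lra)) as [HM1 [Hscale [Hsep_scale [Hstart_scale [Hfar_scale Hln]]]]].
  pose proof (sum_lower_bound c1 c2 A r tau th eps_g M x y D1 D2 D3 D4 n Hc1 Hr Htau Htau_r HM1
                ltac:(unfold th; lra) Hscale Hsep_scale Hstart_scale Hfar_scale Hn Hx Hxy Hy Hsep
                HD)
    as Hlow.
  pose proof (mul_lt_of_le_half C (ln M) (Rpower M (1 - 7 * th)) k _ Hk (exp_pos _) Hln Hlow).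
  lra.
Qed.
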